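(* Any spreading basis $\mathcal{X}=(\mathbf{x}_n)_{n=1}^\infty$ of any quasi-Banach space $\mathbb{X}$ is semi-normalized and M-bounded; that is, $0<\inf_n\|\mathbf{x}_n\|\le\sup_n\|\mathbf{x}_n\|<\infty$ and $\sup_n\|\mathbf{x}_n\|\,\|\mathbf{x}_n^*\|<\infty$, where $(\mathbf{x}_n^* )$ are the coordinate functionals.
   Context: A complete minimal system is a sequence $\mathcal{X}=(\mathbf{x}_n)$ with dense linear span for which there exist (unique) $\mathbf{x}_n^*\in\mathbb{X}^*$ with $\mathbf{x}_n^*(\mathbf{x}_k)=\delta_{n,k}$, the coordinate functionals. For an injective $\psi\colon\mathbb{N}\to\mathbb{N}$, $\psi$ is a shift if $f\mapsto\sum_{n}\mathbf{x}_n^*(f)\,\mathbf{x}_{\psi(n)}$, $f\in\operatorname{span}(\mathcal{X})$, extends to a bounded operator $L_\psi\colon\mathbb{X}\to\mathbb{X}$. A spreading basis is a complete minimal system such that every increasing $\psi\colon\mathbb{N}\to\mathbb{N}$ is a shift and $L_\psi$ is an isomorphism onto its range. *)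

From mathcomp Require Import all_boot all_order all_algebra.
From mathcomp Require Import reals complex.
Set Implicit Arguments. Unset Strict Implicit. Unset Printing Implicit Defensive.
Import Order.TTheory GRing.Theory Num.Theory.
Local Open Scope ring_scope.

(* Scalars: a numFieldType K; the theorem is stated for K = R and K = R[i]
   with R : realType.  A quasi-norm takes values in the (real, nonnegative)
   part of K. *)
Section QB.
Variables (K : numFieldType) (X : lmodType K) (nrm : X -> K).

Definition quasi_norm : Prop :=
  [/\ forall x, 0 <= nrm x,
      forall x, nrm x = 0 -> x = 0,
      forall (a : K) x, nrm (a *: x) = `|a| * nrm x
    & exists kappa : K, forall x y, nrm (x + y) <= kappa * (nrm x + nrm y)].

Definition qcomplete : Prop :=
  forall u : nat -> X,
    (forall e : K, 0 < e -> exists N, forall m n, (N <= m)%N -> (N <= n)%N ->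
       nrm (u m - u n) < e) ->
    exists l : X, forall e : K, 0 < e -> exists N, forall n, (N <= n)%N ->
       nrm (u n - l) < e.

Definition quasi_Banach : Prop := quasi_norm /\ qcomplete.

Definition lin_functional (f : X -> K) : Prop :=
  forall (a : K) x y, f (a *: x + y) = a * f x + f y.
Definition lin_operator (L : X -> X) : Prop :=
  forall (a : K) x y, L (a *: x + y) = a *: L x + L y.

Definition bounded_functional (f : X -> K) : Prop :=
  exists C : K, forall x, `|f x| <= C * nrm x.
Definition bounded_operator (L : X -> X) : Prop :=
  exists C : K, forall x, nrm (L x) <= C * nrm x.

Definition in_span (x : nat -> X) (f : X) : Prop :=
  exists (N : nat) (c : nat -> K), f = \sum_(i < N) c i *: x i.

Definition complete_minimal (x : nat -> X) (xs : nat -> X -> K) : Prop :=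
  [/\ (forall f (e : K), 0 < e -> exists g, in_span x g /\ nrm (f - g) < e),
      (forall n, lin_functional (xs n) /\ bounded_functional (xs n))
    & (forall n k, xs n (x k) = if n == k then 1 else 0)].

Definition shift_operator (x : nat -> X) (xs : nat -> X -> K)
    (psi : nat -> nat) (L : X -> X) : Prop :=
  [/\ lin_operator L, bounded_operator L
    & forall (N : nat) (c : nat -> K),
        let f := \sum_(i < N) c i *: x i in
        L f = \sum_(i < N) xs i f *: x (psi i)].

Definition is_shift (x : nat -> X) (xs : nat -> X -> K) (psi : nat -> nat) :=
  injective psi /\ exists L, shift_operator x xs psi L.

(* spreading: every increasing psi is a shift, and L_psi is an isomorphism
   onto its range (i.e. bounded below) *)
Definition spreading_basis (x : nat -> X) (xs : nat -> X -> K) : Prop :=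
  complete_minimal x xs /\
  forall psi : nat -> nat, (forall m n, (m < n)%N -> (psi m < psi n)%N) ->
    exists L, shift_operator x xs psi L /\
      exists c : K, 0 < c /\ forall f, c * nrm f <= nrm (L f).

(* conclusion: semi-normalized and M-bounded.  sup_n ||x_n|| ||x_n^*|| < oo
   is written out as ||x_n|| |x_n^*(f)| <= C ||f|| for all n, f. *)
Definition seminormalized_Mbounded (x : nat -> X) (xs : nat -> X -> K) : Prop :=
  [/\ exists a : K, 0 < a /\ forall n, a <= nrm (x n),
      exists b : K, forall n, nrm (x n) <= b
    & exists C : K, forall n f, nrm (x n) * `|xs n f| <= C * nrm f].
End QB.

Definition corollary_for (K : numFieldType) : Prop :=
  forall (X : lmodType K) (nrm : X -> K) (x : nat -> X) (xs : nat -> X -> K),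
    quasi_Banach nrm -> spreading_basis nrm x xs ->
    seminormalized_Mbounded nrm x xs.

From HB Require Import structures.
From mathcomp Require Import all_boot all_order all_algebra.
From mathcomp Require Import reals complex.
From mathcomp Require Import ring.
From Stdlib Require Import Classical ClassicalEpsilon.
Set Implicit Arguments.
Unset Strict Implicit.
Unset Printing Implicit Defensive.

Import Order.TTheory GRing.Theory Num.Theory.
Local Open Scope ring_scope.

(* Spreading makes each L_psi an isomorphism onto its range, so for every
   increasing psi the sequences (x_(psi i)) and (x_i) are equivalent with some
   constant M_psi.  A fusion (gliding hump) argument makes the constant
   uniform: otherwise increasing maps with ever worse constants, agreeing on
   ever longer initial segments, glue into one increasing psi for which L_psi
   is not an isomorphism.  With a uniform constant, comparing x_n with x_0
   gives semi-normalization; and for f = sum_i c_i x_i the images of f under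
   the maps skipping n + 1 and skipping n differ by c_n (x_n - x_(n+1)),
   which bounds |c_n| ||x_n|| by a multiple of ||f||.  Density of the span
   extends this bound to all f. *)

Definition increasing (psi : nat -> nat) := {homo psi : a b / (a < b)%N}.

Definition agree_below (m : nat) (phi psi : nat -> nat) :=
  forall i, (i < m)%N -> phi i = psi i.

Section AgreeChain.
Variables (f : nat -> nat -> nat) (m : nat -> nat).
Hypothesis m_nondecr : forall j, (m j <= m j.+1)%N.
Hypothesis f_chain : forall j, agree_below (m j) (f j.+1) (f j).

Lemma agree_below_chain j k : (j <= k)%N -> agree_below (m j) (f k) (f j).
Proof.
elim: k => [|k IHk]; first by rewrite leqn0 => /eqP->.
rewrite leq_eqVlt ltnS => /predU1P[<- //|le_jk] i lt_i_mj.
have le_mj_mk : (m j <= m k)%N by apply: (homo_leq leqnn leq_trans m_nondecr).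
by rewrite f_chain ?(leq_trans lt_i_mj) ?IHk.
Qed.

Lemma agree_below_chain_diagonal :
  (forall i, (i < m i.+1)%N) -> forall j, agree_below (m j) (fun i => f i.+1 i) (f j).
Proof.
move=> lt_i_m j i lt_i_mj.
rewrite -(agree_below_chain (leq_maxr j i.+1) (lt_i_m i)).
exact: (agree_below_chain (leq_maxl j i.+1) lt_i_mj).
Qed.

End AgreeChain.

Lemma increasing_fusion (bad : nat -> (nat -> nat) -> Prop) :
    (forall j psi, bad j psi -> exists m, forall phi, agree_below m phi psi -> bad j phi) ->
    (forall j m s, increasing s ->
       exists psi, [/\ increasing psi, agree_below m psi s & bad j psi]) ->
  exists psi, increasing psi /\ forall j, bad j psi.
Proof.
move=> bad_local bad_extend.
(* A stage (psi, m) freezes psi below m; the next stage keeps those values and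
   moves m past the support of a fresh bad witness, which the limit inherits. *)
pose spec (j : nat) (p q : (nat -> nat) * nat) := (p.2 < q.2)%N /\
  (increasing p.1 -> [/\ increasing q.1,
     agree_below p.2 q.1 p.1 & forall phi, agree_below q.2 phi q.1 -> bad j phi]).
have [step stepP] : exists step, forall jp, spec jp.1 jp.2 (step jp).
  apply: (choice (fun jp q => spec jp.1 jp.2 q)) => -[j [s m]].
  have [s_incr|s_nincr] := classic (increasing s); last first.
    by exists (s, m.+1); split=> // /s_nincr.
  have [psi [psi_incr psi_s /bad_local[n psi_bad]]] := bad_extend j m s s_incr.
  exists (psi, (maxn m n).+1); split=> [|_]; first by rewrite ltnS leq_maxl.
  split=> // phi phi_psi; apply: psi_bad => i lt_in; apply: phi_psi.
  by rewrite ltnS (leq_trans (ltnW lt_in)) ?leq_maxr.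
pose st := fix st j := if j is j'.+1 then step (j', st j') else (id, 0%N).
have st_incr j : increasing (st j).1 /\ (j <= (st j).2)%N.
  elim: j => [|j [IHincr IHle]]; first by split.
  have [lt_st /(_ IHincr)[incr _ _]] := stepP (j, st j).
  by split=> //; apply: leq_ltn_trans lt_st.
have st_step j := (stepP (j, st j)).2 (st_incr j).1.
have st_chain j : agree_below (st j).2 (st j.+1).1 (st j).1 by have [] := st_step j.
have st_m j : ((st j).2 <= (st j.+1).2)%N := ltnW (stepP (j, st j)).1.
have lim_st := @agree_below_chain_diagonal (fun j => (st j).1) (fun j => (st j).2)
  st_m st_chain (fun i => (st_incr i.+1).2).
exists (fun i => (st i.+1).1 i); split=> [a b lt_ab | j].
  have lt_b : (b < (st b.+1).2)%N := (st_incr b.+1).2.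
  rewrite (lim_st b.+1 a (ltn_trans lt_ab lt_b)).
  exact: (st_incr b.+1).1.
by have [_ _] := st_step j; apply; apply: (lim_st j.+1).
Qed.

Section LinearMaps.
Variables (K : numFieldType) (X : lmodType K).

Definition linear_of_functional (f : X -> K) (lf : lin_functional f)
  : {linear X -> K | *%R} := HB.pack f (GRing.isLinear.Build _ _ _ _ f lf).

Definition linear_of_operator (L : X -> X) (lL : lin_operator L) : {linear X -> X} :=
  HB.pack L (GRing.isLinear.Build _ _ _ _ L lL).

Lemma lin_functionalE (f : X -> K) (lf : lin_functional f) : linear_of_functional lf =1 f.
Proof. by []. Qed.

Lemma lin_operatorE (L : X -> X) (lL : lin_operator L) : linear_of_operator lL =1 L.
Proof. by []. Qed.

End LinearMaps.

Lemma ger0_mul_norml (K : numDomainType) (C t : K) : 0 <= t -> 0 <= C * t -> C * t = `|C| * t.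
Proof. by move=> t_ge0 Ct_ge0; rewrite -(ger0_norm Ct_ge0) normrM (ger0_norm t_ge0). Qed.

Definition archimedean (K : numFieldType) := forall C : K, 0 <= C -> exists n : nat, C <= n%:R.

Lemma archimedean_real (R : realType) : archimedean R.
Proof. by move=> C C_ge0; exists (Num.bound C); apply/ltW/archi_boundP. Qed.

Lemma archimedean_complex (R : realType) : archimedean R[i].
Proof.
move=> [a b]; rewrite lecE /= => /andP[/eqP b0 a_ge0].
have [n le_an] := @archimedean_real R a a_ge0; exists n.
by rewrite -(rmorph_nat (real_complex R)) lecE /= -b0 eqxx.
Qed.

Section QuasiNorm.
Variables (K : numFieldType) (X : lmodType K) (nrm : X -> K).
Hypothesis qn : quasi_norm nrm.

Lemma nrm_ge0 v : 0 <= nrm v. Proof. by case: qn. Qed.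

Lemma nrmZ a v : nrm (a *: v) = `|a| * nrm v. Proof. by case: qn. Qed.

Lemma nrmN v : nrm (- v) = nrm v.
Proof. by rewrite -scaleN1r nrmZ normrN1 mul1r. Qed.

Lemma nrm_gt0 v : v != 0 -> 0 < nrm v.
Proof.
move=> v_neq0; rewrite lt_def nrm_ge0 andbT.
by apply: contra v_neq0 => /eqP; case: qn => _ nrm_eq0 _ _ /nrm_eq0->.
Qed.

Lemma quasi_norm_modulus :
  exists2 kap, 0 <= kap & forall u v, nrm (u + v) <= kap * (nrm u + nrm v).
Proof.
case: qn => _ _ _ [kap nrmD]; exists `|kap| => // u v.
have kap_s_ge0 : 0 <= kap * (nrm u + nrm v) := le_trans (nrm_ge0 _) (nrmD u v).
by rewrite -ger0_mul_norml ?addr_ge0 ?nrm_ge0.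
Qed.

Section DenseExtension.
Variables (kap : K) (S : X -> Prop).
Hypothesis kap_ge0 : 0 <= kap.
Hypothesis nrmD : forall u v, nrm (u + v) <= kap * (nrm u + nrm v).
Hypothesis S_dense : forall f (e : K), 0 < e -> exists v, S v /\ nrm (f - v) < e.

Lemma dense_extend_bound (g : X -> K) (a C : K) :
    lin_functional g -> bounded_functional nrm g -> 0 <= a -> 0 <= C ->
    (forall v, S v -> a * `|g v| <= C * nrm v) ->
  forall f, a * `|g f| <= C * kap * nrm f.
Proof.
move=> lg [B gB] a_ge0 C_ge0 g_S f; apply/ler_addgt0Pr => e e_gt0.
set Q := C * kap + a * `|B| + 1.
have Q_gt0 : 0 < Q by rewrite ltr_wpDl ?ltr01 ?addr_ge0 ?mulr_ge0.
have [v [Sv fv_small]] := S_dense f (divr_gt0 e_gt0 Q_gt0).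
have g_split : g f = g v + g (f - v).
  by rewrite -!(lin_functionalE lg) -linearD addrC subrK.
have g_fv : `|g (f - v)| <= `|B| * (e / Q).
  have B_nrm_ge0 : 0 <= B * nrm (f - v) := le_trans (normr_ge0 _) (gB _).
  apply: le_trans (gB _) _; rewrite (ger0_mul_norml (nrm_ge0 _) B_nrm_ge0).
  by apply: ler_wpM2l; [exact: normr_ge0 | exact: ltW].
have nrm_v : nrm v <= kap * (nrm f + e / Q).
  have -> : v = f + - (f - v) by rewrite opprB addrC subrK.
  apply: le_trans (nrmD _ _) _; rewrite nrmN.
  by apply: ler_wpM2l => //; rewrite lerD2l ltW.
apply: (@le_trans _ _ (C * nrm v + a * (`|B| * (e / Q)))).
  rewrite g_split; apply: le_trans (ler_wpM2l a_ge0 (ler_normD _ _)) _.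
  by rewrite mulrDr; apply: lerD; [exact: g_S | apply: ler_wpM2l].
apply: le_trans (lerD (ler_wpM2l C_ge0 nrm_v) (lexx _)) _.
have -> : C * (kap * (nrm f + e / Q)) + a * (`|B| * (e / Q))
        = C * kap * nrm f + (C * kap + a * `|B|) * (e / Q) by ring.
rewrite lerD2l; have le_Q : C * kap + a * `|B| <= Q by rewrite lerDl ler01.
apply: le_trans (ler_wpM2r (ltW (divr_gt0 e_gt0 Q_gt0)) le_Q) _.
by rewrite mulrC divfK ?gt_eqF.
Qed.

End DenseExtension.
End QuasiNorm.

Lemma increasing_addn n : increasing (addn n).
Proof. by move=> i j; rewrite ltn_add2l. Qed.

Lemma increasing_bump h : increasing (bump h).
Proof.
by move=> i j; rewrite !ltn_neqAle leq_bump2 (inj_eq (can_inj (bumpK h))).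
Qed.

Section Spreading.
Variables (K : numFieldType) (X : lmodType K) (nrm : X -> K).
Variables (x : nat -> X) (xs : nat -> X -> K).
Hypothesis qn : quasi_norm nrm.
Hypothesis sb : spreading_basis nrm x xs.

Lemma xs_linear n : lin_functional (xs n).
Proof. by case: sb => -[_ /(_ n)[]]. Qed.

Lemma xs_x n k : xs n (x k) = if n == k then 1 else 0.
Proof. by case: sb => -[]. Qed.

Definition spread (psi : nat -> nat) (N : nat) (c : nat -> K) : X :=
  \sum_(i < N) c i *: x (psi i).

Lemma eq_spread phi psi N c : agree_below N phi psi -> spread phi N c = spread psi N c.
Proof. by move=> phi_psi; apply: eq_bigr => i _; rewrite phi_psi. Qed.

Lemma spread_pad psi m N c :
  spread psi (m + N) (fun i => if (i < m)%N then 0 else c (i - m)%N)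
  = spread (fun i => psi (m + i)%N) N c.
Proof.
rewrite /spread big_split_ord /= big1 ?add0r => [|i _]; last by rewrite ltn_ord scale0r.
by apply: eq_bigr => i _; rewrite ltnNge leq_addr addKn.
Qed.

Lemma spread_delta psi k : spread psi k.+1 (fun i => if i == k then 1 else 0) = x (psi k).
Proof.
rewrite /spread big_ord_recr /= eqxx scale1r big1 ?add0r // => i _.
by rewrite ltn_eqF ?scale0r.
Qed.

Lemma coord_spread n N c : xs n (spread id N c) = if (n < N)%N then c n else 0.
Proof.
rewrite -(lin_functionalE (xs_linear n)) linear_sum.
rewrite (eq_bigr (fun i : 'I_N => c i * (if n == i then 1 else 0))) => [|i _]; last first.
  by rewrite linearZ /= xs_x.
case: ltnP => [lt_nN | le_Nn].
  rewrite (bigD1 (Ordinal lt_nN)) //= eqxx mulr1 big1 ?addr0 // => i.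
  by rewrite -val_eqE eq_sym => /negbTE->; rewrite mulr0.
by rewrite big1 // => i _; rewrite gtn_eqF ?mulr0 // (leq_trans (ltn_ord i)).
Qed.

Lemma spread_eq0 N c : spread id N c = 0 -> forall n, (n < N)%N -> c n = 0.
Proof.
move=> spread0 n lt_nN; have := coord_spread n N c.
by rewrite lt_nN spread0 -(lin_functionalE (xs_linear n)) linear0.
Qed.

Section ShiftOperator.
Variables (psi : nat -> nat) (L : X -> X).
Hypothesis L_shift : shift_operator nrm x xs psi L.

Lemma shift_operator_spread N c : L (spread id N c) = spread psi N c.
Proof.
case: L_shift => _ _ /(_ N c) /= ->.
by apply: eq_bigr => i _; rewrite -/(spread id N c) coord_spread ltn_ord.
Qed.

Lemma shift_operator_x k : L (x k) = x (psi k).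
Proof. by rewrite -(spread_delta id) shift_operator_spread spread_delta. Qed.

Lemma shift_operator_spread_comp phi N c : L (spread phi N c) = spread (psi \o phi) N c.
Proof.
case: L_shift => L_lin _ _; rewrite -(lin_operatorE L_lin) linear_sum.
by apply: eq_bigr => i _; rewrite linearZ /= shift_operator_x.
Qed.

End ShiftOperator.

Lemma spread1 psi c : spread psi 1 c = c 0%N *: x (psi 0%N).
Proof. by rewrite /spread big_ord1. Qed.

Lemma spread2 psi c : spread psi 2 c = c 0%N *: x (psi 0%N) + c 1%N *: x (psi 1%N).
Proof. by rewrite /spread !big_ord_recl big_ord0 addr0. Qed.

Lemma spread_bump_sub n N c : (n < N)%N ->
  spread (bump n.+1) N c - spread (bump n) N c = c n *: (x n - x n.+1).
Proof.
move=> lt_nN; rewrite /spread -sumrB (bigD1 (Ordinal lt_nN)) //= big1 ?addr0.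
  by rewrite /bump ltnn leqnn scalerBr.
move=> i /eqP i_neq_n; rewrite /bump ltn_neqAle (_ : (n != i) = true) ?subrr //.
by apply/eqP => n_eq_i; apply: i_neq_n; apply: val_inj.
Qed.

Lemma x_neq0 k : x k != 0.
Proof.
apply/eqP; rewrite -(spread_delta id) => /spread_eq0/(_ k (ltnSn k)).
by rewrite eqxx => /eqP; rewrite oner_eq0.
Qed.

Definition spread_equiv (M : K) (phi psi : nat -> nat) := forall N c,
  nrm (spread phi N c) <= M * nrm (spread psi N c) /\
  nrm (spread psi N c) <= M * nrm (spread phi N c).

Lemma spread_equiv_sym M phi psi : spread_equiv M phi psi -> spread_equiv M psi phi.
Proof. by move=> equiv N c; have [] := equiv N c. Qed.

Lemma spread_equiv_le M M' phi psi :
  M <= M' -> spread_equiv M phi psi -> spread_equiv M' phi psi.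
Proof.
move=> le_MM' equiv N c; have [le_phi le_psi] := equiv N c.
by split; [apply: le_trans le_phi _ | apply: le_trans le_psi _];
  apply: ler_wpM2r => //; apply: nrm_ge0.
Qed.

Lemma spread_equiv_trans M1 M2 phi psi rho : 0 <= M1 -> 0 <= M2 ->
  spread_equiv M1 phi psi -> spread_equiv M2 psi rho -> spread_equiv (M1 * M2) phi rho.
Proof.
move=> M1_ge0 M2_ge0 equiv1 equiv2 N c.
have [phi_psi psi_phi] := equiv1 N c; have [psi_rho rho_psi] := equiv2 N c.
split; first by apply: le_trans phi_psi _; rewrite -mulrA; apply: ler_wpM2l.
by apply: le_trans rho_psi _; rewrite (mulrC M1) -mulrA; apply: ler_wpM2l.
Qed.

Lemma spread_equiv_shift M phi psi m : spread_equiv M phi psi ->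
  spread_equiv M (fun i => phi (m + i)%N) (fun i => psi (m + i)%N).
Proof. by move=> equiv N c; rewrite -!spread_pad; apply: equiv. Qed.

Lemma spread_equiv_comp psi : increasing psi ->
  exists2 M, 0 < M & forall phi, spread_equiv M (psi \o phi) phi.
Proof.
case: sb => _ /[apply] -[L [L_shift [c [c_gt0 L_below]]]].
have [_ [C L_above] _] := L_shift.
exists (`|C| + c^-1) => [|phi N d]; first by rewrite ltr_wpDl ?invr_gt0.
rewrite -(shift_operator_spread_comp L_shift); set f := spread phi N d.
split.
  apply: le_trans (L_above f) _.
  rewrite (ger0_mul_norml (nrm_ge0 qn f) (le_trans (nrm_ge0 qn _) (L_above f))).
  by apply: ler_wpM2r; [exact: nrm_ge0 | rewrite lerDl invr_ge0 ltW].
apply: (@le_trans _ _ (c^-1 * nrm (L f))); first by rewrite ler_pdivlMl.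
by apply: ler_wpM2r; [exact: nrm_ge0 | rewrite lerDr].
Qed.

Lemma spread_equiv_transfer s m M : increasing s -> 0 < M ->
    (forall psi, increasing psi -> agree_below m psi s -> spread_equiv M psi id) ->
  exists2 M', 0 < M' & forall phi, increasing phi -> spread_equiv M' phi id.
Proof.
move=> s_incr M_gt0 equiv_s.
(* Splice phi, translated past s m, behind the first m values of s: up to the
   translations by m and by s m, the equivalence for psi is the one for phi. *)
have [Mt Mt_gt0 equiv_t] := spread_equiv_comp (increasing_addn (s m)).
have [Mm Mm_gt0 equiv_m] := spread_equiv_comp (increasing_addn m).
exists (Mt * (M * Mm)) => [|phi phi_incr]; first by rewrite !mulr_gt0.
pose psi i := if (i < m)%N then s i else (s m + phi (i - m))%N.
have psi_incr : increasing psi.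
  move=> i j lt_ij; rewrite /psi; case: (ltnP i m) => [lt_im|le_mi].
    case: (ltnP j m) => _; first exact: s_incr lt_ij.
    exact: leq_trans (s_incr _ _ lt_im) (leq_addr _ _).
  rewrite [(j < m)%N]ltnNge (leq_trans le_mi (ltnW lt_ij)) /= ltn_add2l.
  by apply: phi_incr; rewrite ltn_sub2r // (leq_ltn_trans le_mi lt_ij).
have psi_s : agree_below m psi s by move=> i lt_im; rewrite /psi lt_im.
have equiv_tail : spread_equiv M (addn (s m) \o phi) (addn m).
  move=> N c; rewrite -(@eq_spread (fun i => psi (m + i)%N)) => [|i _].
    exact: (spread_equiv_shift m (equiv_s psi psi_incr psi_s)).
  by rewrite /psi ltnNge leq_addr addKn.
apply: spread_equiv_trans (spread_equiv_sym (equiv_t phi)) _; rewrite ?mulr_ge0 ?ltW //.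
by apply: spread_equiv_trans equiv_tail (equiv_m id); rewrite ltW.
Qed.

(* The fusion argument indexes the possible constants by the naturals. *)
Section Archimedean.
Hypothesis K_archi : archimedean K.

Lemma spread_equiv_uniform :
  exists2 M, 0 < M & forall psi, increasing psi -> spread_equiv M psi id.
Proof.
apply: NNPP => not_uniform.
have [psi [psi_incr psi_bad]] :
    exists psi, increasing psi /\ forall j, ~ spread_equiv j.+1%:R psi id.
  apply: increasing_fusion => [j psi | j m s s_incr].
    move=> /not_all_ex_not[N /not_all_ex_not[c not_equiv]].
    by exists N => phi phi_psi equiv; apply: not_equiv; rewrite -(eq_spread c phi_psi).
  apply: NNPP => no_bad; apply: not_uniform.
  apply: (spread_equiv_transfer (m := m) s_incr (ltr0Sn _ j)) => psi psi_incr psi_s.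
  by apply: NNPP => psi_bad; apply: no_bad; exists psi; split.
have [M M_gt0 equiv] := spread_equiv_comp psi_incr.
have [j le_Mj] := K_archi (ltW M_gt0).
apply: (psi_bad j); apply: spread_equiv_le (equiv id).
by apply: le_trans le_Mj _; rewrite ler_nat.
Qed.

Lemma x_seminormalized : exists2 a, 0 < a & exists b, forall n, a <= nrm (x n) <= b.
Proof.
have [M M_gt0 equiv] := spread_equiv_uniform.
have x0_gt0 := nrm_gt0 qn (x_neq0 0).
exists (nrm (x 0%N) / M); first by rewrite divr_gt0.
exists (M * nrm (x 0%N)) => n.
have [le_n le_0] := equiv _ (increasing_addn n) 1%N (fun=> 1).
rewrite !spread1 !scale1r addn0 in le_n le_0.
by rewrite ler_pdivrMr // mulrC le_0 le_n.
Qed.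

Lemma x_sub_succ_bounded_below :
  exists2 d, 0 < d & forall n, d <= nrm (x n - x n.+1).
Proof.
have [M M_gt0 equiv] := spread_equiv_uniform.
pose c i : K := if i == 0%N then 1 else -1.
have x01_neq0 : x 0%N - x 1%N != 0.
  apply/eqP; rewrite -[x 0%N - _](_ : spread id 2 c = _) => [/spread_eq0/(_ 0%N isT)|].
    by move/eqP; rewrite oner_eq0.
  by rewrite spread2 scale1r scaleN1r.
exists (nrm (x 0%N - x 1%N) / M); first by rewrite divr_gt0 ?(nrm_gt0 qn).
move=> n; have [_ le_01] := equiv _ (increasing_addn n) 2 c.
rewrite !spread2 !scale1r !scaleN1r addn0 addn1 in le_01.
by rewrite ler_pdivrMr // mulrC.
Qed.

Lemma coef_nrm_x_sub_succ_bounded :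
  exists2 B, 0 <= B & forall n N c, (n < N)%N ->
    `|c n| * nrm (x n - x n.+1) <= B * nrm (spread id N c).
Proof.
have [M M_gt0 equiv] := spread_equiv_uniform.
have [kap kap_ge0 nrmD] := quasi_norm_modulus qn.
exists (kap * (M + M)) => [|n N c lt_nN]; first by rewrite mulr_ge0 // addr_ge0 // ltW.
rewrite -(nrmZ qn) -(spread_bump_sub c lt_nN); apply: le_trans (nrmD _ _) _.
rewrite nrmN // -mulrA mulrDl; apply: ler_wpM2l => //.
by apply: lerD; apply: (equiv _ (increasing_bump _) N c).1.
Qed.

Lemma Mbounded_on_span :
  exists2 C, 0 <= C & forall n N c,
    nrm (x n) * `|xs n (spread id N c)| <= C * nrm (spread id N c).
Proof.
have [a _ [b x_bounded]] := x_seminormalized.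
have [d d_gt0 x_sub_bounded] := x_sub_succ_bounded_below.
have [B B_ge0 coef_bounded] := coef_nrm_x_sub_succ_bounded.
have b_ge0 : 0 <= b by have /andP[_] := x_bounded 0%N; apply: le_trans (nrm_ge0 qn _).
have bd_ge0 : 0 <= b / d := divr_ge0 b_ge0 (ltW d_gt0).
exists (b / d * B) => [|n N c]; first exact: mulr_ge0.
rewrite coord_spread; case: ltnP => [lt_nN|_]; last first.
  by rewrite normr0 mulr0; apply: mulr_ge0; [exact: mulr_ge0 | exact: nrm_ge0].
apply: (@le_trans _ _ (b * `|c n|)).
  by apply: ler_wpM2r; [exact: normr_ge0 | have /andP[] := x_bounded n].
have -> : b * `|c n| = b / d * (`|c n| * d) by field; rewrite gt_eqF.
rewrite -[leRHS]mulrA; apply: ler_wpM2l => //.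
apply: le_trans (coef_bounded n N c lt_nN).
by apply: ler_wpM2l => //; exact: x_sub_bounded.
Qed.

Lemma spreading_seminormalized_Mbounded : seminormalized_Mbounded nrm x xs.
Proof.
have [a a_gt0 [b x_bounded]] := x_seminormalized.
have [C C_ge0 span_bounded] := Mbounded_on_span.
have [kap kap_ge0 nrmD] := quasi_norm_modulus qn.
case: sb => -[x_dense xs_bounded _] _.
split.
- by exists a; split=> // n; have /andP[] := x_bounded n.
- by exists b => n; have /andP[] := x_bounded n.
- exists (C * kap) => n f.
  apply: (dense_extend_bound qn kap_ge0 nrmD x_dense (xs_linear n) (xs_bounded n).2) => //.
    exact: nrm_ge0.
  by move=> _ [N [c ->]]; apply: span_bounded.
Qed.

End Archimedean.
End Spreading.

Theorem corollary2p7 :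
  forall R : realType, corollary_for R /\ corollary_for (R[i]).
Proof.
move=> R; split=> X nrm x xs [qn _] sb.
  exact: spreading_seminormalized_Mbounded qn sb (@archimedean_real R).
exact: spreading_seminormalized_Mbounded qn sb (@archimedean_complex R).
Qed.
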